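(* Let $H$ be a complex Hilbert space, let $K \in \mathcal{L}(H)$ be a positive compact operator, and let $\eta$ be a positive real number with $\eta > \|K\|/2$. Then the operator $W := \eta I - K$ satisfies the property $\mathcal{AN}^*$.
   Context: $\mathcal{L}(H)$ is the space of bounded linear operators on $H$; positive means $\langle Kx,x\rangle \ge 0$ for all $x\in H$. For a closed subspace $M \neq \{0\}$ of $H$ and $T \in \mathcal{L}(H)$, write $[T|_M] := \inf\{\|Tx\| : x \in M, \|x\|=1\}$; $T|_M$ satisfies $\mathcal{N}^*$ if there is $x_0 \in M$ with $\|x_0\|=1$ and $\|Tx_0\| = [T|_M]$. $T$ satisfies the property $\mathcal{AN}^*$ if $T|_M$ satisfies $\mathcal{N}^*$ for every closed subspace $M \neq \{0\}$ of $H$. *)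

From HB Require Import structures.
From mathcomp Require Import all_boot all_order all_algebra.
From mathcomp Require Import all_classical all_reals.
From mathcomp Require Import complex.
Set Implicit Arguments. Unset Strict Implicit. Unset Printing Implicit Defensive.
Import Order.TTheory GRing.Theory Num.Theory.
Local Open Scope ring_scope.
Local Open Scope classical_set_scope.

Section Hilbert.
Variables (R : realType) (H : lmodType R[i]) (ip : H -> H -> R[i]).

Definition hnorm (x : H) : R := Num.sqrt (complex.Re (ip x x)).

Definition is_inner_product : Prop :=
  [/\ (forall (a : R[i]) (x y z : H), ip (a *: x + y) z = a * ip x z + ip y z),
      (forall x y, ip y x = conjc (ip x y)),
      (forall x, 0 <= ip x x) &
      (forall x, ip x x = 0 -> x = 0)].

Definition hcauchy (u : nat -> H) : Prop :=
  forall e : R, 0 < e -> exists N : nat, forall m n : nat,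
    (N <= m)%N -> (N <= n)%N -> hnorm (u m - u n) < e.

Definition hconverges (u : nat -> H) (l : H) : Prop :=
  forall e : R, 0 < e -> exists N : nat, forall n : nat,
    (N <= n)%N -> hnorm (u n - l) < e.

Definition hcomplete : Prop :=
  forall u : nat -> H, hcauchy u -> exists l, hconverges u l.

Definition is_hilbert : Prop := is_inner_product /\ hcomplete.

Definition bounded_linear (T : H -> H) : Prop :=
  (forall (a : R[i]) (x y : H), T (a *: x + y) = a *: T x + T y) /\
  (exists c : R, forall x, hnorm (T x) <= c * hnorm x).

Definition opnorm (T : H -> H) : R :=
  sup [set hnorm (T x) | x in [set x | hnorm x <= 1]].

(* positive operator: <Kx, x> >= 0 (in the order of C, i.e. real and nonnegative) *)
Definition positive_op (K : H -> H) : Prop := forall x, 0 <= ip (K x) x.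

Definition compact_op (K : H -> H) : Prop :=
  forall u : nat -> H, (exists c : R, forall n, hnorm (u n) <= c) ->
  exists (phi : nat -> nat) (l : H),
    (forall n, (phi n < phi n.+1)%N) /\ hconverges (fun n => K (u (phi n))) l.

Definition closed_subspace (M : set H) : Prop :=
  [/\ M 0,
      (forall (a : R[i]) (x y : H), M x -> M y -> M (a *: x + y)) &
      (forall (u : nat -> H) (l : H), (forall n, M (u n)) -> hconverges u l -> M l)].

Definition restr_lower_bound (T : H -> H) (M : set H) : R :=
  inf [set hnorm (T x) | x in [set x | M x /\ hnorm x = 1]].

Definition N_star (T : H -> H) (M : set H) : Prop :=
  exists x0 : H, [/\ M x0, hnorm x0 = 1 & hnorm (T x0) = restr_lower_bound T M].

Definition AN_star (T : H -> H) : Prop :=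
  forall M : set H, closed_subspace M -> M <> [set 0] -> N_star T M.

End Hilbert.

From HB Require Import structures.
From mathcomp Require Import all_boot all_order all_algebra.
From mathcomp Require Import all_classical all_reals.
From mathcomp Require Import complex.
From mathcomp Require Import ring lra.
Import Order.TTheory GRing.Theory Num.Theory.
Set Implicit Arguments. Unset Strict Implicit. Unset Printing Implicit Defensive.
Local Open Scope ring_scope.
Local Open Scope classical_set_scope.

(* With W := eta - K, positivity and Cauchy-Schwarz give
   |K x|^2 <= |K| <K x, x> <= 2 eta <K x, x>, so expanding |W x|^2 yields
   |W| <= eta; hence m := [W|_M] <= eta, and every unit vector of M attains m
   when m = eta.  If m < eta, take unit vectors y_n of M with |W y_n| -> m and,
   by compactness, K y_n convergent.  The quadratic form
   q v := |W v|^2 - m^2 |v|^2 is nonnegative on M, so the parallelogram law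
   gives q (y_i - y_j) <= 2 q y_i + 2 q y_j -> 0, while
   q v >= (eta^2 - m^2) |v|^2 - 2 eta |K v| |v|.  Thus (y_n) is Cauchy and its
   limit is a unit vector of M at which |W .| equals m. *)

Lemma quad_ge0_discr (R : realFieldType) (a b c : R) :
  (forall t, 0 <= a + 2 * t * b + t ^+ 2 * c) -> 0 <= c -> b ^+ 2 <= a * c.
Proof.
move=> hq hc; have ha : 0 <= a by move: (hq 0); rewrite expr2; lra.
have [cp|c0] := ltP 0 c.
  have := hq (- (b / c)); set u := b / c.
  have -> : b = u * c by rewrite mulfVK ?gt_eqF.
  nra.
have {hc} c_eq0 : c = 0 by apply/le_anti; rewrite c0 hc.
subst c; rewrite mulr0; have [->|bn] := eqVneq b 0; first by rewrite expr0n.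
have := hq (- (a + 1) / (2 * b)).
have -> : 2 * (- (a + 1) / (2 * b)) * b = - (a + 1) by field; rewrite bn.
lra.
Qed.

Lemma eventually_inv_lt (R : archiRealFieldType) (r : R) : 0 < r ->
  exists N, forall n, (N <= n)%N -> n.+1%:R^-1 < r.
Proof.
move=> r0; exists (Num.Def.truncn r^-1) => n hn.
rewrite -(invrK r) ltf_pV2 ?posrE ?invr_gt0 ?ltr0n //.
by apply: lt_le_trans (truncnS_gt _) _; rewrite ler_nat ltnS.
Qed.

Section RealForm.
Variables (R : rcfType) (H : lmodType R[i]).

Definition rscale (t : R) (x : H) : H := t%:C%C *: x.

Lemma rscaleA s t x : rscale s (rscale t x) = rscale (s * t) x.
Proof. by rewrite /rscale scalerA rmorphM. Qed.

Lemma rscale1 x : rscale 1 x = x.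
Proof. by rewrite /rscale rmorph1 scale1r. Qed.

Variable f : H -> H -> R.
Hypothesis f_linear : forall t x y z, f (rscale t x + y) z = t * f x z + f y z.
Hypothesis f_sym : forall x y, f x y = f y x.

Lemma formD x y z : f (x + y) z = f x z + f y z.
Proof. by rewrite -{1}(rscale1 x) f_linear mul1r. Qed.

Lemma form0 z : f 0 z = 0.
Proof. by apply: (addrI (f 0 z)); rewrite -formD !addr0. Qed.

Lemma formZ t x z : f (rscale t x) z = t * f x z.
Proof. by rewrite -(addr0 (rscale t x)) f_linear form0 addr0. Qed.

Lemma formN x z : f (- x) z = - f x z.
Proof. by rewrite -[- x]scaleN1r -(rmorphN1 (real_complex R)) formZ mulN1r. Qed.

Lemma formDr x y z : f z (x + y) = f z x + f z y.
Proof. by rewrite f_sym formD !(f_sym _ z). Qed.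

Lemma formNr x z : f z (- x) = - f z x.
Proof. by rewrite f_sym formN f_sym. Qed.

Lemma form_sqrD x y : f (x + y) (x + y) = f x x + 2 * f x y + f y y.
Proof. rewrite !formD !formDr (f_sym y x); ring. Qed.

Lemma form_sqrB x y : f (x - y) (x - y) = f x x - 2 * f x y + f y y.
Proof. rewrite form_sqrD (formN y) !(formNr y) opprK; ring. Qed.

Lemma form_sqrZ t x : f (rscale t x) (rscale t x) = t ^+ 2 * f x x.
Proof. rewrite formZ f_sym formZ; ring. Qed.

Lemma form_CauchySchwarz x y :
  (forall z, 0 <= f z z) -> f x y ^+ 2 <= f x x * f y y.
Proof.
move=> f_ge0; apply: quad_ge0_discr (f_ge0 y) => t.
have := f_ge0 (x + rscale t y); rewrite form_sqrD form_sqrZ.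
by rewrite f_sym formZ f_sym mulrA.
Qed.

End RealForm.

Section InnerProduct.
Variables (R : realType) (H : lmodType R[i]) (ip : H -> H -> R[i]).
Hypothesis ip_inner : is_inner_product ip.

Local Notation nrm := (hnorm ip).

Definition rip (x y : H) : R := complex.Re (ip x y).
Definition sqnorm (x : H) : R := rip x x.

Lemma ipDl x y z : ip (x + y) z = ip x z + ip y z.
Proof. by case: ip_inner => lin _ _ _; rewrite -{1}(scale1r x) lin mul1r. Qed.

Lemma ip0l z : ip 0 z = 0.
Proof. by apply: (addrI (ip 0 z)); rewrite -ipDl !addr0. Qed.

Lemma ipZl a x z : ip (a *: x) z = a * ip x z.
Proof. by case: ip_inner => lin _ _ _; rewrite -(addr0 (a *: x)) lin ip0l addr0. Qed.

Lemma ipDr x y z : ip z (x + y) = ip z x + ip z y.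
Proof. by case: ip_inner => _ conj _ _; rewrite conj ipDl rmorphD (conj x z) (conj y z). Qed.

Lemma ipZr a x z : ip z (a *: x) = a^*%C * ip z x.
Proof. by case: ip_inner => _ conj _ _; rewrite conj ipZl rmorphM (conj x z). Qed.

Lemma rip_linear t x y z : rip (rscale t x + y) z = t * rip x z + rip y z.
Proof.
rewrite /rip /rscale ipDl ipZl.
by case: (ip x z) => a b; case: (ip y z) => c d /=; ring.
Qed.

Lemma ripC x y : rip x y = rip y x.
Proof. by case: ip_inner => _ conj _ _; rewrite /rip conj; case: (ip y x). Qed.

Lemma sqnorm_ge0 x : 0 <= sqnorm x.
Proof. by case: ip_inner => _ _ ge0 _; move: (ge0 x); rewrite lecE => /andP[]. Qed.

Lemma sqnorm_eq0 x : sqnorm x = 0 -> x = 0.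
Proof.
case: ip_inner => _ _ ge0 eq0 hx; apply: eq0; move: (ge0 x) hx.
by rewrite lecE /sqnorm /rip; case: (ip x x) => a b /= /andP[/eqP -> _] ->.
Qed.

Lemma hnorm_ge0 x : 0 <= nrm x.
Proof. exact: sqrtr_ge0. Qed.

Lemma sqr_hnorm x : nrm x ^+ 2 = sqnorm x.
Proof. by rewrite sqr_sqrtr // sqnorm_ge0. Qed.

Lemma hnorm_eq0 x : nrm x = 0 -> x = 0.
Proof. by move=> hx; apply: sqnorm_eq0; rewrite -sqr_hnorm hx expr0n. Qed.

Lemma rip_le_hnorm x y : rip x y <= nrm x * nrm y.
Proof.
have := form_CauchySchwarz rip_linear ripC x y sqnorm_ge0.
rewrite -/(sqnorm x) -/(sqnorm y) -!sqr_hnorm -exprMn => cs.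
have := mulr_ge0 (hnorm_ge0 x) (hnorm_ge0 y); nra.
Qed.

Lemma sqnormD x y : sqnorm (x + y) = sqnorm x + 2 * rip x y + sqnorm y.
Proof. exact: form_sqrD rip_linear ripC x y. Qed.

Lemma sqnormB x y : sqnorm (x - y) = sqnorm x - 2 * rip x y + sqnorm y.
Proof. exact: form_sqrB rip_linear ripC x y. Qed.

Lemma sqnorm_parallelogram x y :
  sqnorm (x + y) + sqnorm (x - y) = 2 * sqnorm x + 2 * sqnorm y.
Proof. rewrite sqnormD sqnormB; ring. Qed.

Lemma hnormD x y : nrm (x + y) <= nrm x + nrm y.
Proof.
rewrite -(ler_pXn2r (n := 2)) ?nnegrE ?addr_ge0 ?hnorm_ge0 //.
by rewrite sqrrD !sqr_hnorm sqnormD lerD2r lerD2l mulr_natl lerMn2r rip_le_hnorm.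
Qed.

Lemma hnormZ t x : nrm (rscale t x) = `|t| * nrm x.
Proof.
by rewrite /hnorm -/(rip _ _) (form_sqrZ rip_linear ripC) sqrtrM ?sqrtr_sqr ?sqr_ge0.
Qed.

Lemma hnormN x : nrm (- x) = nrm x.
Proof.
by rewrite -scaleN1r -(rmorphN1 (real_complex R)) hnormZ normrN1 mul1r.
Qed.

Lemma hnorm0 : nrm 0 = 0.
Proof. by rewrite /hnorm ip0l sqrtr0. Qed.

Lemma hnorm_normalize x : nrm x != 0 -> nrm (rscale (nrm x)^-1 x) = 1.
Proof. by move=> x0; rewrite hnormZ ger0_norm ?invr_ge0 ?hnorm_ge0 // mulVf. Qed.

Lemma rscale_normalize x : nrm x != 0 -> rscale (nrm x) (rscale (nrm x)^-1 x) = x.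
Proof. by move=> x0; rewrite rscaleA mulfV // rscale1. Qed.

Lemma hcauchy_sqnorm (u : nat -> H) (d : R) : 0 < d ->
  (forall r, 0 < r -> exists N, forall m n, (N <= m)%N -> (N <= n)%N ->
     d * sqnorm (u m - u n) < r) ->
  hcauchy ip u.
Proof.
move=> d0 hu e e0; have [N hN] := hu (d * e ^+ 2) (mulr_gt0 d0 (exprn_gt0 _ e0)).
exists N => m n hm hn; have := hN m n hm hn; rewrite ltr_pM2l // -sqr_hnorm.
by rewrite ltr_pXn2r ?nnegrE ?hnorm_ge0 ?ltW.
Qed.

Lemma hconverges_le (u : nat -> H) l (a : R) : hconverges ip u l ->
  (forall e, 0 < e -> exists N, forall n, (N <= n)%N -> nrm (u n) <= a + e) ->
  nrm l <= a.
Proof.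
move=> ul ua; apply/ler_addgt0Pr => e e0.
have e2 : 0 < e / 2 by rewrite divr_gt0.
have [N1 hN1] := ul _ e2; have [N2 hN2] := ua _ e2.
have := hN1 _ (leq_maxl N1 N2); have := hN2 _ (leq_maxr N1 N2).
have := hnormD (u (maxn N1 N2)) (- (u (maxn N1 N2) - l)).
rewrite hnormN opprB addrC subrK; lra.
Qed.

Lemma hconverges_ge (u : nat -> H) l (a : R) : hconverges ip u l ->
  (forall n, a <= nrm (u n)) -> a <= nrm l.
Proof.
move=> ul ua; apply/ler_addgt0Pr => e e0; have [N hN] := ul _ e0.
have := hN N (leqnn N); have := ua N; have := hnormD (u N - l) l.
rewrite subrK; lra.
Qed.

Lemma hconverges_lipschitz (T : H -> H) (c : R) (u : nat -> H) l : 0 <= c ->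
  (forall x y, T (x - y) = T x - T y) -> (forall x, nrm (T x) <= c * nrm x) ->
  hconverges ip u l -> hconverges ip (fun n => T (u n)) (T l).
Proof.
move=> c0 TB Tc ul e e0; have c1 : 0 < c + 1 by rewrite ltr_wpDl.
have [N hN] := ul _ (divr_gt0 e0 c1); exists N => n /hN; rewrite -TB.
rewrite ltr_pdivlMr // => un; apply: le_lt_trans (Tc _) _.
by have := hnorm_ge0 (u n - l); nra.
Qed.

Section PositiveOperator.
Variable K : H -> H.
Hypothesis K_bounded : bounded_linear ip K.
Hypothesis K_pos : positive_op ip K.

HB.instance Definition _ :=
  GRing.isLinear.Build R[i] H H *:%R K (fun a x y => proj1 K_bounded a x y).

Lemma K_rscale t x : K (rscale t x) = rscale t (K x).
Proof. exact: linearZ. Qed.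

Definition krip (x y : H) : R := rip (K x) y.

Lemma krip_linear t x y z : krip (rscale t x + y) z = t * krip x z + krip y z.
Proof. by rewrite /krip linearD /= K_rscale rip_linear. Qed.

Lemma krip_ge0 x : 0 <= krip x x.
Proof. by move: (K_pos x); rewrite lecE => /andP[]. Qed.

(* Positivity makes [ip (K v) v] real for every [v]; taking [v = x + 'i y]
   gives the symmetry. *)
Lemma kripC x y : krip x y = krip y x.
Proof.
have real_Kv v : complex.Im (ip (K v) v) = 0.
  by move: (K_pos v); rewrite lecE => /andP[/eqP ->].
have := real_Kv (x + 'i%C *: y); rewrite linearD linearZ /= ipDl !ipDr !ipZl !ipZr.
have := real_Kv x; have := real_Kv y; rewrite /krip /rip.
case: (ip (K x) x) => a1 b1; case: (ip (K y) y) => a2 b2.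
case: (ip (K x) y) => a3 b3; case: (ip (K y) x) => a4 b4 /= -> ->; lra.
Qed.

Lemma opnorm_ub x : nrm x <= 1 -> nrm (K x) <= opnorm ip K.
Proof.
move=> x1; apply: ub_le_sup; last by exists x.
case: K_bounded => _ [c hc]; exists `|c| => _ [v /= v1 <-].
have := hc v; have := hnorm_ge0 v; have := ler_norm c; have := normr_ge0 c; nra.
Qed.

Lemma opnorm_ge0 : 0 <= opnorm ip K.
Proof. by have := opnorm_ub (x := 0); rewrite linear0 hnorm0 ler01; apply. Qed.

Lemma hnormK_le x : nrm (K x) <= opnorm ip K * nrm x.
Proof.
have [/hnorm_eq0 ->|x0] := eqVneq (nrm x) 0; first by rewrite linear0 hnorm0 mulr0.
rewrite -{1}(rscale_normalize x0) K_rscale hnormZ ger0_norm ?hnorm_ge0 // mulrC.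
by rewrite ler_wpM2r ?hnorm_ge0 // opnorm_ub // hnorm_normalize.
Qed.

(* Cauchy-Schwarz for the semi-inner product [krip], applied to [x] and [K x]. *)
Lemma sqnormK_le x : sqnorm (K x) <= opnorm ip K * krip x x.
Proof.
have cs := form_CauchySchwarz krip_linear kripC x (K x) krip_ge0.
have KKx : krip (K x) (K x) <= opnorm ip K * sqnorm (K x).
  apply: le_trans (rip_le_hnorm _ _) _; rewrite -sqr_hnorm expr2 mulrA.
  by rewrite ler_wpM2r ?hnorm_ge0 ?hnormK_le.
have : sqnorm (K x) * sqnorm (K x) <= opnorm ip K * krip x x * sqnorm (K x).
  rewrite -expr2 -mulrA mulrCA; apply: le_trans cs _.
  by rewrite ler_wpM2l ?krip_ge0.
have [->|s0] := eqVneq (sqnorm (K x)) 0; first by rewrite mulr_ge0 ?opnorm_ge0 ?krip_ge0.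
by rewrite ler_pM2r // lt_def s0 sqnorm_ge0.
Qed.

Section Shift.
Variable eta : R.
Hypothesis opnorm_le : opnorm ip K <= 2 * eta.

Definition W (x : H) : H := eta%:C%C *: x - K x.

Lemma W_linearP a x y : W (a *: x + y) = a *: W x + W y.
Proof.
rewrite /W (proj1 K_bounded) scalerDr scalerBr !scalerA (mulrC a) opprD.
by rewrite addrACA.
Qed.

HB.instance Definition _ := GRing.isLinear.Build R[i] H H *:%R W W_linearP.

Lemma eta_ge0 : 0 <= eta.
Proof. by have := opnorm_ge0; have := opnorm_le; lra. Qed.

Lemma sqnormW x : sqnorm (W x) = eta ^+ 2 * sqnorm x - 2 * eta * krip x x + sqnorm (K x).
Proof.
rewrite /W -/(rscale eta x) sqnormB /sqnorm (form_sqrZ rip_linear ripC).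
by rewrite (formZ rip_linear) (ripC x) mulrA.
Qed.

Lemma hnormW_le x : nrm (W x) <= eta * nrm x.
Proof.
rewrite -(ler_pXn2r (n := 2)) ?nnegrE ?mulr_ge0 ?hnorm_ge0 ?eta_ge0 //.
rewrite exprMn !sqr_hnorm sqnormW.
have := sqnormK_le x; have := ler_wpM2r (krip_ge0 x) opnorm_le; lra.
Qed.

Section Subspace.
Variable M : set H.
Hypothesis M_closed : closed_subspace ip M.
Hypothesis M_nontrivial : M <> [set 0].

Local Notation m := (restr_lower_bound ip W M).

Lemma M_addZ a x y : M x -> M y -> M (a *: x + y).
Proof. by case: M_closed => _ addZ _; apply: addZ. Qed.

Lemma M_add x y : M x -> M y -> M (x + y).
Proof. by move=> Mx My; rewrite -[x]scale1r; apply: M_addZ. Qed.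

Lemma M_rscale t x : M x -> M (rscale t x).
Proof. by case: M_closed => M0 _ _ Mx; rewrite -[rscale t x]addr0; apply: M_addZ. Qed.

Lemma exists_unit : exists u, M u /\ nrm u = 1.
Proof.
have [[x Mx x0]|no_x] := pselect (exists2 x, M x & nrm x != 0).
  by exists (rscale (nrm x)^-1 x); split; [apply: M_rscale | apply: hnorm_normalize].
exfalso; apply: M_nontrivial; apply/seteqP; split=> x /=; last first.
  by case: M_closed => M0 _ _ ->.
move=> Mx; apply: hnorm_eq0; apply/eqP/negPn/negP => x0.
by apply: no_x; exists x.
Qed.

Lemma lower_bound_le x : M x -> nrm x = 1 -> m <= nrm (W x).
Proof.
move=> Mx x1; apply: ge_inf; last by exists x.
by exists 0 => _ [v _ <-]; exact: hnorm_ge0.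
Qed.

Lemma lower_bound_ge0 : 0 <= m.
Proof.
apply: lb_le_inf => [|_ [v _ <-]]; last exact: hnorm_ge0.
by have [u Su] := exists_unit; exists (nrm (W u)), u.
Qed.

Lemma lower_bound_le_eta : m <= eta.
Proof.
have [u [Mu u1]] := exists_unit; apply: le_trans (lower_bound_le Mu u1) _.
by have := hnormW_le u; rewrite u1 mulr1.
Qed.

Lemma lower_bound_homog v : M v -> m * nrm v <= nrm (W v).
Proof.
move=> Mv; have [->|v0] := eqVneq (nrm v) 0; first by rewrite mulr0 hnorm_ge0.
rewrite -{2}(rscale_normalize v0) /rscale linearZ /= -/(rscale _ _) hnormZ.
rewrite ger0_norm ?hnorm_ge0 // mulrC ler_wpM2l ?hnorm_ge0 //.
by apply: lower_bound_le; [apply: M_rscale | apply: hnorm_normalize].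
Qed.

Definition defect (x : H) : R := sqnorm (W x) - m ^+ 2 * sqnorm x.

(* [defect] is a quadratic form, nonnegative on [M]; the parallelogram law then
   bounds it at [x - y] by its values at [x] and [y]. *)
Lemma defect_sub_le x y : M (x + y) -> defect (x - y) <= 2 * defect x + 2 * defect y.
Proof.
move=> Mxy; have := lower_bound_homog Mxy.
rewrite -(ler_pXn2r (n := 2)) ?nnegrE ?mulr_ge0 ?hnorm_ge0 ?lower_bound_ge0 //.
rewrite exprMn !sqr_hnorm => defect_xy.
have := sqnorm_parallelogram x y; have := sqnorm_parallelogram (W x) (W y).
rewrite -[W x + W y]linearD -[W x - W y]linearB /defect /=; nra.
Qed.

Lemma defect_ge z :
  (eta ^+ 2 - m ^+ 2) * sqnorm z - 2 * (eta * nrm (K z)) * nrm z <= defect z.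
Proof.
rewrite /defect sqnormW mulrBl; have := sqnorm_ge0 (K z).
have := ler_wpM2l eta_ge0 (rip_le_hnorm (K z) z); rewrite -/(krip z z); lra.
Qed.

Lemma sphere_gap x y : M x -> M y -> nrm x = 1 -> nrm y = 1 ->
  (eta ^+ 2 - m ^+ 2) * sqnorm (x - y)
    <= 2 * defect x + 2 * defect y + 4 * (eta * nrm (K x - K y)).
Proof.
move=> Mx My x1 y1; have := defect_sub_le (M_add Mx My).
have := defect_ge (x - y); rewrite linearB /=.
have z2 : nrm (x - y) <= 2 by have := hnormD x (- y); rewrite hnormN x1 y1.
have := ler_wpM2l (mulr_ge0 eta_ge0 (hnorm_ge0 (K x - K y))) z2; lra.
Qed.

Lemma defect_lt x r : M x -> nrm x = 1 -> nrm (W x) < m + r -> r <= 1 ->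
  defect x < (2 * eta + 1) * r.
Proof.
move=> Mx x1 Wx r1; have := lower_bound_le Mx x1.
rewrite /defect -!sqr_hnorm x1 expr1n mulr1.
have := lower_bound_ge0; have := lower_bound_le_eta; nra.
Qed.

Lemma minimizing_sequence : exists y : nat -> H,
  forall n, [/\ M (y n), nrm (y n) = 1 & nrm (W (y n)) < m + n.+1%:R^-1].
Proof.
have S0 : [set nrm (W x) | x in [set x | M x /\ nrm x = 1]] !=set0.
  by have [u Su] := exists_unit; exists (nrm (W u)), u.
suff /choice[y hy] : forall n, exists y : H,
    [/\ M y, nrm y = 1 & nrm (W y) < m + n.+1%:R^-1] by exists y.
move=> n; have : m < m + n.+1%:R^-1 by rewrite ltrDl invr_gt0 ltr0n.
by case/(inf_lt S0) => _ [y [My y1] <-] Wy; exists y.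
Qed.

Lemma sqr_lower_bound_gap : m < eta -> 0 < eta ^+ 2 - m ^+ 2.
Proof. by move=> m_lt; have := lower_bound_ge0; rewrite subr_gt0; nra. Qed.

Section Compactness.
Hypothesis K_compact : compact_op ip K.

Lemma compact_minimizing_sequence : exists (y : nat -> H) l,
  (forall n, [/\ M (y n), nrm (y n) = 1 & nrm (W (y n)) < m + n.+1%:R^-1]) /\
  hconverges ip (fun n => K (y n)) l.
Proof.
have [x hx] := minimizing_sequence.
have [|phi [l [phi_incr Kl]]] := K_compact (u := x).
  by exists 1 => n; have [_ -> _] := hx n.
have phi_ge n : (n <= phi n)%N.
  by elim: n => // n IH; apply: leq_ltn_trans IH (phi_incr n).
exists (fun n => x (phi n)), l; split=> // n; have [Mx x1 Wx] := hx (phi n); split=> //.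
by apply: lt_le_trans Wx _; rewrite lerD2l lef_pV2 ?posrE ?ltr0n // ler_nat ltnS.
Qed.

Lemma minimizing_hcauchy (y : nat -> H) l : m < eta ->
  (forall n, [/\ M (y n), nrm (y n) = 1 & nrm (W (y n)) < m + n.+1%:R^-1]) ->
  hconverges ip (fun n => K (y n)) l -> hcauchy ip y.
Proof.
move=> m_lt hy Kyl; apply: (hcauchy_sqnorm (sqr_lower_bound_gap m_lt)) => r r0.
have c0 : 0 < 8 * (2 * eta + 1) by have := eta_ge0; lra.
set d := r / (8 * (2 * eta + 1)); have d0 : 0 < d by rewrite divr_gt0.
have [N1 hN1] := eventually_inv_lt d0; have [N2 hN2] := Kyl d d0.
exists (maxn N1 N2) => i j; rewrite !geq_max => /andP[i1 i2] /andP[j1 j2].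
have inv_le1 n : n.+1%:R^-1 <= 1 :> R by rewrite invf_le1 ?ler1n ?ltr0n.
have [Mi yi1 Wi] := hy i; have [Mj yj1 Wj] := hy j.
have := sphere_gap Mi Mj yi1 yj1.
have := defect_lt Mi yi1 Wi (inv_le1 i); have := defect_lt Mj yj1 Wj (inv_le1 j).
have e0 : 0 <= 2 * eta + 1 by have := eta_ge0; lra.
have := ler_wpM2l e0 (ltW (hN1 i i1)); have := ler_wpM2l e0 (ltW (hN1 j j1)).
have Kij : nrm (K (y i) - K (y j)) <= 2 * d.
  have := hnormD (K (y i) - l) (- (K (y j) - l)); rewrite hnormN opprB addrA subrK.
  by have := hN2 i i2; have := hN2 j j2; lra.
have := ler_wpM2l eta_ge0 Kij.
have : 8 * (2 * eta + 1) * d = r by rewrite /d mulrC divfK ?gt_eqF.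
set ri := i.+1%:R^-1; set rj := j.+1%:R^-1; lra.
Qed.

Lemma minimizing_limit (y : nat -> H) x :
  (forall n, [/\ M (y n), nrm (y n) = 1 & nrm (W (y n)) < m + n.+1%:R^-1]) ->
  hconverges ip y x -> [/\ M x, nrm x = 1 & nrm (W x) = m].
Proof.
move=> hy yx; have Mx : M x.
  by case: M_closed => _ _ M_lim; apply: M_lim yx => n; have [] := hy n.
have x1 : nrm x = 1.
  apply/le_anti/andP; split; last by apply: (hconverges_ge yx) => n; have [_ -> _] := hy n.
  apply: (hconverges_le yx) => e e0; exists 0%N => n _; have [_ -> _] := hy n.
  by rewrite lerDl ltW.
split=> //; apply/le_anti/andP; split; last exact: lower_bound_le.
have Wyx := hconverges_lipschitz eta_ge0 (fun u v => linearB W u v) hnormW_le yx.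
apply: (hconverges_le Wyx) => e e0; have [N hN] := eventually_inv_lt e0.
exists N => n /hN inv_lt; have [_ _ Wy] := hy n.
by apply/ltW/(lt_trans Wy); rewrite ltrD2l.
Qed.

Hypothesis H_complete : hcomplete ip.

Lemma lower_bound_attained : N_star ip W M.
Proof.
have [m_lt|m_ge] := ltP m eta.
  have [y [l [hy Kyl]]] := compact_minimizing_sequence.
  have [x yx] := H_complete (minimizing_hcauchy m_lt hy Kyl).
  by have [Mx x1 Wx] := minimizing_limit hy yx; exists x.
have [u [Mu u1]] := exists_unit; exists u; split=> //.
apply/le_anti; rewrite lower_bound_le // andbT; apply: le_trans m_ge.
by have := hnormW_le u; rewrite u1 mulr1.
Qed.

End Compactness.
End Subspace.
End Shift.
End PositiveOperator.
End InnerProduct.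

Theorem lemma3p11 (R : realType) (H : lmodType R[i]) (ip : H -> H -> R[i])
  (hH : is_hilbert ip) (K : H -> H)
  (hKlin : bounded_linear ip K) (hKpos : positive_op ip K) (hKcomp : compact_op ip K)
  (eta : R) (heta0 : 0 < eta) (heta : opnorm ip K / 2 < eta) :
  AN_star ip (fun x => (eta%:C)%C *: x - K x).
Proof.
move=> M M_closed M_nontrivial; case: hH => ip_inner H_complete.
have opnorm_le : opnorm ip K <= 2 * eta.
  by move: heta; rewrite ltr_pdivrMr // mulrC => /ltW.
exact: (lower_bound_attained ip_inner hKlin hKpos opnorm_le M_closed M_nontrivial
  hKcomp H_complete).
Qed.
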